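(* There is a polynomial $p$ such that for every $N\geq1$, every $\varepsilon,\eta\in(0,1]$ and every finite nonempty $V\subseteq\mathbb{R}^N$, there is a partition of $V$ into at most $2^{p(1/\varepsilon,1/\eta)}$ clusters such that whenever $u,v$ lie in the same cluster, there are at most $\eta|V|$ points $w\in V$ with $w\in B(u,1)\setminus B(v,1+\varepsilon)$.
   Context: $B(v,r)$ denotes the closed Euclidean ball of radius $r$ centered at $v$. The polynomial $p$ does not depend on $N$ or $V$. *)

From HB Require Import structures.
From mathcomp Require Import all_boot all_order all_algebra.
From mathcomp Require Import finmap.
From mathcomp Require Import all_classical all_reals exp.
Set Implicit Arguments. Unset Strict Implicit. Unset Printing Implicit Defensive.
Import Order.TTheory GRing.Theory Num.Theory.
Local Open Scope ring_scope.

Definition edist (R : realType) (N : nat) (u v : 'rV[R]_N) : R :=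
  Num.sqrt (\sum_(i < N) (u ord0 i - v ord0 i) ^+ 2).

Definition in_ball (R : realType) (N : nat) (c : 'rV[R]_N) (r : R) (w : 'rV[R]_N) : bool :=
  edist w c <= r.

Definition eval2 (R : realType) (p : {poly {poly R}}) (x y : R) : R :=
  (p.[y%:P]).[x].

(* Points whose unit ball contains at most eta |V| points of V can all share one
   cluster.  The other, heavy, points lie within distance 2 of a maximal 4-separated
   family of heavy centers, and there are fewer than 1/eta + 1 centers because their
   unit balls are disjoint.  The energy of a direction x is the sum of <w - c, x>^2 over
   the centers c and the points w of V within distance sqrt 10 of c; its total over an
   orthonormal family is at most 10 |V| times the number of centers, so greedily
   collecting directions of energy above eta eps^2 |V| / 64 stops after
   poly(1/eps, 1/eta) steps, leaving only low-energy directions orthogonal to them.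
   A heavy point u is labelled by its center c, by the coordinates of u - c along the
   collected directions and by |u - c|^2, all rounded to a fine grid.  If u and v
   have the same label, every w in B(u, 1) \ B(v, 1 + eps) has a component larger
   than eps/2 along the part of v - u orthogonal to those directions, so by
   Chebyshev's inequality there are at most eta |V| such w.  There are
   2^poly(1/eps, 1/eta) labels. *)

From HB Require Import structures.
From mathcomp Require Import all_boot all_order all_algebra.
From mathcomp Require Import finmap.
From mathcomp Require Import all_classical all_reals exp.
From mathcomp Require Import ring lra zify.
Set Implicit Arguments. Unset Strict Implicit. Unset Printing Implicit Defensive.
Import Order.TTheory GRing.Theory Num.Theory.
Local Open Scope ring_scope.

Section InnerProduct.
Variables (R : realFieldType) (N : nat).
Implicit Types (a : R) (u v w : 'rV[R]_N).

Definition dot u v : R := \sum_(i < N) u ord0 i * v ord0 i.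
Definition sqnorm u := dot u u.

Lemma dotC u v : dot u v = dot v u.
Proof. by apply: eq_bigr => i _; rewrite mulrC. Qed.

Lemma dotDl u v w : dot (u + v) w = dot u w + dot v w.
Proof. by rewrite /dot -big_split; apply: eq_bigr => i _; rewrite !mxE mulrDl. Qed.

Lemma dotZl a u v : dot (a *: u) v = a * dot u v.
Proof. by rewrite /dot mulr_sumr; apply: eq_bigr => i _; rewrite !mxE mulrA. Qed.

Lemma dotNl u v : dot (- u) v = - dot u v.
Proof. by rewrite -scaleN1r dotZl mulN1r. Qed.

Lemma dotBl u v w : dot (u - v) w = dot u w - dot v w.
Proof. by rewrite dotDl dotNl. Qed.

Lemma dotDr u v w : dot u (v + w) = dot u v + dot u w.
Proof. by rewrite dotC dotDl !(dotC u). Qed.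

Lemma dotZr a u v : dot u (a *: v) = a * dot u v.
Proof. by rewrite dotC dotZl dotC. Qed.

Lemma dotBr u v w : dot u (v - w) = dot u v - dot u w.
Proof. by rewrite dotC dotBl !(dotC u). Qed.

Lemma dot0r u : dot u 0 = 0.
Proof. by rewrite /dot big1 // => i _; rewrite mxE mulr0. Qed.

Lemma dot_sumr (I : Type) (r : seq I) (P : pred I) (F : I -> 'rV[R]_N) u :
  dot u (\sum_(i <- r | P i) F i) = \sum_(i <- r | P i) dot u (F i).
Proof.
elim/big_rec2: _ => [|i x y _ <-]; first by rewrite dot0r.
by rewrite dotDr.
Qed.

Lemma dot_suml (I : Type) (r : seq I) (P : pred I) (F : I -> 'rV[R]_N) u :
  dot (\sum_(i <- r | P i) F i) u = \sum_(i <- r | P i) dot (F i) u.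
Proof. by rewrite dotC dot_sumr; apply: eq_bigr => i _; rewrite dotC. Qed.

Lemma sqnorm_ge0 u : 0 <= sqnorm u.
Proof. by apply: sumr_ge0 => i _; rewrite -expr2 sqr_ge0. Qed.

Lemma sqnorm_eq0_dot u v : sqnorm u = 0 -> dot u v = 0.
Proof.
move=> /eqP; rewrite psumr_eq0 => [/allP u0|i _]; last by rewrite -expr2 sqr_ge0.
rewrite /dot big1 // => i _.
by have := u0 i (mem_index_enum i); rewrite -expr2 sqrf_eq0 => /eqP ->; rewrite mul0r.
Qed.

Lemma sqnormD u v : sqnorm (u + v) = sqnorm u + 2 * dot u v + sqnorm v.
Proof. by rewrite /sqnorm !dotDl !dotDr (dotC v u); ring. Qed.

Lemma sqnormB u v : sqnorm (u - v) = sqnorm u - 2 * dot u v + sqnorm v.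
Proof. by rewrite /sqnorm !dotBl !dotBr (dotC v u); ring. Qed.

Lemma sqnormN u : sqnorm (- u) = sqnorm u.
Proof. by rewrite /sqnorm dotNl dotC dotNl opprK. Qed.

Lemma sqnormZ a u : sqnorm (a *: u) = a ^+ 2 * sqnorm u.
Proof. by rewrite /sqnorm dotZl dotZr mulrA expr2. Qed.

Lemma sqnormD_le u v : sqnorm (u + v) <= 2 * sqnorm u + 2 * sqnorm v.
Proof. by have := sqnorm_ge0 (u - v); rewrite sqnormB sqnormD; lra. Qed.

Lemma sqnormB_le u v : sqnorm (u - v) <= 2 * sqnorm u + 2 * sqnorm v.
Proof. by have := sqnormD_le u (- v); rewrite sqnormN. Qed.

End InnerProduct.

Section Orthonormal.
Variables (R : realFieldType) (N : nat).
Implicit Types (s : seq 'rV[R]_N) (x y : 'rV[R]_N).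

Definition orthonormal_family s := forall i j, (i < size s)%N -> (j < size s)%N ->
  dot s`_i s`_j = (i == j)%:R.

Definition orth_proj s x := \sum_(i < size s) dot x s`_i *: s`_i.
Definition resid s x := x - orth_proj s x.

Lemma dot_orth_proj s x y : dot y (orth_proj s x) = \sum_(i < size s) dot x s`_i * dot y s`_i.
Proof. by rewrite dot_sumr; apply: eq_bigr => i _; rewrite dotZr. Qed.

Lemma sum_mul_delta n (c : 'I_n -> R) (j : 'I_n) :
  \sum_(i < n) c i * (i == j :> nat)%:R = c j.
Proof.
rewrite (bigD1 j) //= eqxx mulr1 big1 ?addr0 // => i.
by rewrite -val_eqE => /negPf ->; rewrite mulr0.
Qed.

Section Family.
Variable s : seq 'rV[R]_N.
Hypothesis s_on : orthonormal_family s.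

Lemma sqnorm_orth_proj x : sqnorm (orth_proj s x) = \sum_(i < size s) dot x s`_i ^+ 2.
Proof.
rewrite {1}/sqnorm {1}/orth_proj dot_suml; apply: eq_bigr => i _.
rewrite dotZl dot_orth_proj.
under eq_bigr => j _ do rewrite (s_on (ltn_ord i) (ltn_ord j)) eq_sym.
by rewrite sum_mul_delta expr2.
Qed.

Lemma sqnorm_resid x : sqnorm (resid s x) = sqnorm x - \sum_(i < size s) dot x s`_i ^+ 2.
Proof.
rewrite /resid sqnormB sqnorm_orth_proj dot_orth_proj.
under eq_bigr => i _ do rewrite -expr2.
ring.
Qed.

Lemma bessel x : \sum_(i < size s) dot x s`_i ^+ 2 <= sqnorm x.
Proof. by have := sqnorm_ge0 (resid s x); rewrite sqnorm_resid subr_ge0. Qed.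

Lemma sqnorm_resid_le x : sqnorm (resid s x) <= sqnorm x.
Proof.
rewrite sqnorm_resid gerBl; apply: sumr_ge0 => i _; exact: sqr_ge0.
Qed.

Lemma dot_sqr_le x j : dot x s`_j ^+ 2 <= sqnorm x.
Proof.
have [js|js] := ltnP j (size s); last first.
  by rewrite nth_default // dot0r expr0n sqnorm_ge0.
apply: le_trans (bessel x).
rewrite (bigD1 (Ordinal js)) //= lerDl; apply: sumr_ge0 => i _; exact: sqr_ge0.
Qed.

Lemma dot_resid x j : (j < size s)%N -> dot (resid s x) s`_j = 0.
Proof.
move=> js; rewrite dotBl (dotC (orth_proj s x)) dot_orth_proj.
under eq_bigr => i _ do rewrite (s_on js (ltn_ord i)) eq_sym.
by rewrite (sum_mul_delta (fun i : 'I_(size s) => dot x s`_i) (Ordinal js)) subrr.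
Qed.

Lemma orthonormal_family_cons e : sqnorm e = 1 ->
  (forall j, (j < size s)%N -> dot e s`_j = 0) -> orthonormal_family (e :: s).
Proof.
move=> e1 e_orth [|i] [|j] //= i_lt j_lt; first by rewrite e_orth.
  by rewrite dotC e_orth.
by rewrite s_on.
Qed.

End Family.
End Orthonormal.

Lemma edistE (R : realType) N (u v : 'rV[R]_N) : edist u v = Num.sqrt (sqnorm (u - v)).
Proof.
by rewrite /edist /sqnorm /dot; congr Num.sqrt; apply: eq_bigr => i _; rewrite !mxE expr2.
Qed.

Lemma in_ballE (R : realType) N (c : 'rV[R]_N) r w :
  0 <= r -> in_ball c r w = (sqnorm (w - c) <= r ^+ 2).
Proof.
move=> r_ge0; rewrite /in_ball edistE.
have s_ge0 := sqnorm_ge0 (w - c).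
by rewrite -(ler_pXn2r (n := 2)) ?nnegrE ?sqrtr_ge0 // sqr_sqrtr.
Qed.

Lemma sumr_const_seq (R : nmodType) (T : Type) (s : seq T) (c : R) :
  \sum_(x <- s) c = c *+ size s.
Proof. by elim: s => [|x s IH]; rewrite ?big_nil ?big_cons ?IH ?mulrS. Qed.

Lemma ler_sum_mem (R : numDomainType) (T : eqType) (s : seq T) (F : T -> R) x :
  (forall y, 0 <= F y) -> x \in s -> F x <= \sum_(y <- s) F y.
Proof.
move=> F_ge0; elim: s => // y s IH; rewrite in_cons big_cons => /orP[/eqP->|xs].
  by rewrite lerDl sumr_ge0.
by apply: le_trans (IH xs) _; rewrite lerDr.
Qed.

Lemma markov_count (R : numDomainType) (T : Type) (s : seq T) (P : pred T)
    (f : T -> R) a :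
  (forall x, P x -> 0 <= f x) ->
  (count (fun x => P x && (a < f x)) s)%:R * a <= \sum_(x <- s | P x) f x.
Proof.
move=> f_ge0; elim: s => [|x s IH]; first by rewrite big_nil mul0r.
rewrite big_cons /=; case: (boolP (P x)) => Px //=.
case: (boolP (a < f x)) => ax /=.
  by rewrite natrD mulrDl mul1r lerD // ltW.
by rewrite add0n -[X in X <= _]add0r lerD // f_ge0.
Qed.

Lemma exists_maximal_seq (T : Type) (P : seq T -> Prop) (b : nat) :
  P [::] -> (forall s, P s -> (size s < b)%N) ->
  exists2 s, P s & forall x, ~ P (x :: s).
Proof.
move=> P0 P_size.
suff: forall k s, P s -> (b - size s <= k)%N -> exists2 s, P s & forall x, ~ P (x :: s).
  by move=> /(_ b [::]); apply => //; rewrite subn0.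
elim=> [|k IH] s Ps bound; first by have := P_size s Ps; lia.
have [[x Pxs]|maximal] := pselect (exists x, P (x :: s)); last first.
  by exists s => // x Pxs; apply: maximal; exists x.
apply: (IH (x :: s) Pxs); have := P_size _ Pxs; rewrite /=; lia.
Qed.

Lemma mul_truncnS_gt1 (R : archiRealFieldType) (x : R) :
  0 < x -> 1 < x * (Num.truncn x^-1).+1%:R.
Proof.
move=> x_gt0; rewrite -[X in X < _](mulfV (lt0r_neq0 x_gt0)) ltr_pM2l //; exact: truncnS_gt.
Qed.

Lemma truncnS_le_double (R : archiRealFieldType) (x : R) :
  1 <= x -> (Num.truncn x).+1%:R <= 2 * x.
Proof.
move=> x_ge1; have : (Num.truncn x)%:R <= x by rewrite truncn_le; lra.
by rewrite -natr1; lra.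
Qed.

Definition bucket (R : archiRealFieldType) (m lo t : R) : nat :=
  Num.truncn ((t - lo) / m).

Section Buckets.
Variables (R : archiRealFieldType) (m lo : R).
Hypothesis m_gt0 : 0 < m.

Lemma bucket_lt hi t k : lo <= t <= hi -> hi - lo < k%:R * m -> (bucket m lo t < k)%N.
Proof.
move=> /andP[lo_t t_hi] hi_k.
have q_ge0 : 0 <= (t - lo) / m by rewrite divr_ge0 ?subr_ge0 // ltW.
by rewrite /bucket truncn_lt_nat // ltr_pdivrMr //; lra.
Qed.

Lemma bucket_dist t t' : lo <= t -> lo <= t' -> bucket m lo t = bucket m lo t' ->
  `|t' - t| < m.
Proof.
move=> lo_t lo_t'; rewrite /bucket => same.
have q_ge0 : forall r, lo <= r -> 0 <= (r - lo) / m.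
  by move=> r lo_r; rewrite divr_ge0 ?subr_ge0 // ltW.
have := truncn_itv (q_ge0 _ lo_t); have := truncn_itv (q_ge0 _ lo_t').
rewrite same -natr1; move: (Num.truncn _) => k.
rewrite !ler_pdivlMr ?ltr_pdivrMr // => /andP[? ?] /andP[? ?].
rewrite ltr_norml; apply/andP; split; lra.
Qed.

End Buckets.

Section Separation.
Variables (R : realFieldType) (N : nat) (s : seq 'rV[R]_N) (k : nat) (eps m : R).
Hypotheses (s_on : orthonormal_family s) (size_s : (size s <= k)%N) (m_gt0 : 0 < m)
  (m_small : m * (1 + 8 * k%:R) <= eps).

(* Expanding the squared distances gives 2 <z, y - x> < m - 2 eps, while the part of
   y - x spanned by [s] contributes at most 4 k m since |z|^2 <= 10. *)
Lemma dot_resid_lt x y z :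
  sqnorm x <= 4 -> sqnorm y <= 4 ->
  (forall j, (j < size s)%N -> `|dot y s`_j - dot x s`_j| < m) ->
  `|sqnorm y - sqnorm x| < m ->
  sqnorm (z - x) <= 1 -> (1 + eps) ^+ 2 < sqnorm (z - y) ->
  eps / 2 < - dot z (resid s (y - x)).
Proof.
move=> x4 y4 close_dot close_norm zx zy.
have z10 : sqnorm z <= 10.
  by have := sqnormD_le (z - x) x; rewrite subrK; lra.
have dot_diff : 2 * dot z (y - x) =
    sqnorm y - sqnorm x + sqnorm (z - x) - sqnorm (z - y).
  by rewrite dotBr !sqnormB; ring.
have proj_small : `|dot z (orth_proj s (y - x))| <= k%:R * (m * 4).
  rewrite dot_orth_proj; apply: le_trans (ler_norm_sum _ _ _) _.
  apply: le_trans (_ : \sum_(i < size s) (m * 4) <= _); last first.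
    by rewrite sumr_const card_ord -[X in X <= _]mulr_natl ler_pM2r ?ler_nat // mulr_gt0.
  apply: ler_sum => i _; rewrite normrM; apply: ler_pM => //.
    by rewrite dotBl; apply/ltW/close_dot.
  have := dot_sqr_le s_on z i; move: (dot z s`_i) => t t2.
  by rewrite ler_norml; apply/andP; split; nra.
have : (1 + eps) ^+ 2 = 1 + 2 * eps + eps ^+ 2 by ring.
have := sqr_ge0 eps.
move: close_norm proj_small m_small; rewrite ltr_norml ler_norml /resid dotBr.
have -> : m * (1 + 8 * k%:R) = m + 2 * (k%:R * (m * 4)) by ring.
move: (k%:R * (m * 4)) => t; lra.
Qed.

Lemma far_point_resid_sqr x y z :
  sqnorm x <= 4 -> sqnorm y <= 4 ->
  (forall j, (j < size s)%N -> `|dot y s`_j - dot x s`_j| < m) ->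
  `|sqnorm y - sqnorm x| < m ->
  sqnorm (z - x) <= 1 -> (1 + eps) ^+ 2 < sqnorm (z - y) ->
  (sqnorm z <= 10) && (eps ^+ 2 / 4 < dot z (resid s (y - x)) ^+ 2).
Proof.
move=> x4 y4 close_dot close_norm zx zy; apply/andP; split.
  by have := sqnormD_le (z - x) x; rewrite subrK; lra.
have eps_ge0 : 0 <= eps.
  by apply: le_trans m_small; rewrite mulr_ge0 ?addr_ge0 ?mulr_ge0 // ltW.
have := dot_resid_lt x4 y4 close_dot close_norm zx zy.
by move: (dot _ _) => t; nra.
Qed.

End Separation.

Lemma inord_inj k a b : (a < k.+1)%N -> (b < k.+1)%N ->
  (inord a : 'I_k.+1) = inord b -> a = b.
Proof. by move=> a_lt b_lt /(congr1 val); rewrite /= !inordK. Qed.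

Section Clustering.
Variables (R : realType) (eps eta : R).

(* [A] and [B] are integers exceeding 1/eps and 1/eta.  There are fewer than [B]
   centers and fewer than [k0] principal directions, and coordinates are rounded to
   a grid of [M.+1] cells of width [m] covering [-2, 4]. *)
Definition A := (Num.truncn eps^-1).+1.
Definition B := (Num.truncn eta^-1).+1.
Definition k0 := (640 * A ^ 2 * B ^ 2)%N.
Definition m := eps / (9 * k0.+1%:R).
Definition M := (54 * k0.+1 * A)%N.

Definition key_type := option ('I_B * {ffun 'I_k0 -> 'I_M.+1} * 'I_M.+1).
Definition key_exponent := (B + M.+1 * k0.+1).+1.

Lemma card_key_type : (#|{: key_type}| <= 2 ^ key_exponent)%N.
Proof.
rewrite card_option !card_prod card_ffun !card_ord -mulnA -expnSr.
rewrite /key_exponent (expnS 2) expnD.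
have B_lt := ltn_expl B (ltnSn 1).
have M_le : (M.+1 ^ k0.+1 <= 2 ^ (M.+1 * k0.+1))%N.
  by rewrite expnM leq_exp2r // ltnW // ltn_expl.
have := leq_mul (ltnW B_lt) M_le.
have : (0 < 2 ^ B * 2 ^ (M.+1 * k0.+1))%N by rewrite muln_gt0 !expn_gt0.
move: (B * _)%N (2 ^ B * _)%N => X Y; lia.
Qed.

Lemma key_exponent_le : (key_exponent <= (55 * 641 * 641 + 2) * (A * B) ^ 5)%N.
Proof.
have A_le : (A <= A * B)%N by rewrite leq_pmulr.
have B_le : (B <= A * B)%N by rewrite leq_pmull.
have k0E : k0 = (640 * (A * B) ^ 2)%N by rewrite /k0 expnMn mulnA.
rewrite /key_exponent /M k0E; move: (A * B)%N A_le B_le => P A_le B_le.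
have P_pos : (0 < P)%N := leq_trans (ltn0Sn _) A_le.
have k0S : ((640 * P ^ 2).+1 <= 641 * P ^ 2)%N.
  by have := expn_gt0 P 2; rewrite P_pos; lia.
have MS : ((54 * (640 * P ^ 2).+1 * A).+1 <= 55 * 641 * P ^ 3)%N.
  have : (54 * (640 * P ^ 2).+1 * A <= 54 * 641 * P ^ 3)%N.
    by rewrite [(P ^ 3)%N]expnSr mulnA leq_mul // -mulnA leq_mul2l.
  by have := expn_gt0 P 3; rewrite P_pos; lia.
have P5 : (0 < P <= P ^ 5)%N by rewrite P_pos -{1}(expn1 P) leq_pexp2l.
have := leq_mul MS k0S.
have -> : (55 * 641 * P ^ 3 * (641 * P ^ 2) = 55 * 641 * 641 * P ^ 5)%N.
  by rewrite (_ : 5 = 3 + 2)%N // expnD; ring.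
move: (_.+1 * _)%N (P ^ 5)%N P5 => Y Q; lia.
Qed.

Hypotheses (eps_gt0 : 0 < eps) (eta_gt0 : 0 < eta).

Lemma m_gt0 : 0 < m.
Proof. by rewrite divr_gt0 // mulr_gt0 // ltr0n. Qed.

Lemma m_small : m * (1 + 8 * k0%:R) <= eps.
Proof.
rewrite /m mulrAC ler_pdivrMr ?mulr_gt0 ?ltr0n // ler_pM2l // -natr1.
by have : 0 <= k0%:R :> R by []; lra.
Qed.

Lemma grid_covers : 6 < M.+1%:R * m.
Proof.
have epsA : 1 < eps * A%:R := mul_truncnS_gt1 eps_gt0.
have Mm : M%:R * m = 6 * (eps * A%:R).
  by rewrite /M /m !natrM; field; rewrite addrC natr1 pnatr_eq0.
by have := m_gt0; rewrite -natr1 mulrDl mul1r Mm; lra.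
Qed.

Lemma bucket_inord_eq t t' : -2 <= t <= 4 -> -2 <= t' <= 4 ->
  (inord (bucket m (-2) t) : 'I_M.+1) = inord (bucket m (-2) t') -> `|t' - t| < m.
Proof.
move=> t_range t'_range same_inord.
have fits r : -2 <= r <= 4 -> (bucket m (-2) r < M.+1)%N.
  by move=> r_range; apply: (bucket_lt m_gt0 r_range); have := grid_covers; lra.
have same := inord_inj (fits _ t_range) (fits _ t'_range) same_inord.
case/andP: t_range => t_lo _; case/andP: t'_range => t'_lo _.
by have := bucket_dist m_gt0 t_lo t'_lo same.
Qed.

Variables (N : nat) (V : {fset 'rV[R]_N}).
Hypothesis V_neq0 : V != fset0.
Implicit Types (u v w x : 'rV[R]_N) (cs s : seq 'rV[R]_N).

Local Notation n := #|` V|.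

Lemma card_V_gt0 : (0 < n)%N.
Proof. by rewrite cardfs_gt0. Qed.

Definition ball_count u := count (fun w => sqnorm (w - u) <= 1) V.

Definition heavy u := eta * n%:R < (ball_count u)%:R.

Definition separated cs := pairwise (fun c c' => 4 < sqnorm (c - c')) cs.

Lemma count_near_separated w cs : separated cs ->
  (count (fun c => (sqnorm (w - c) <= 1)%R) cs <= 1)%N.
Proof.
elim: cs => // c cs IH; rewrite /separated pairwise_cons => /andP[c_far cs_sep] /=.
case: (boolP (sqnorm (w - c) <= 1)%R) => w_c /=; last by rewrite add0n IH.
rewrite -[X in (_ <= X)%N]addn0 leq_add2l leqn0 eqn0Ngt -has_count.
apply/hasPn => c' c'_in; apply/negP => w_c'.
have := allP c_far c' c'_in.
have -> : c - c' = (w - c') - (w - c) by rewrite opprB [RHS]addrC addrA subrK.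
by have := sqnormB_le (w - c') (w - c); lra.
Qed.

Lemma sum_ball_count_le cs : separated cs -> (\sum_(c <- cs) ball_count c <= n)%N.
Proof.
move=> cs_sep; rewrite /ball_count.
under eq_bigr => c _ do rewrite -sum1_count.
rewrite (exchange_big_dep xpredT) //= -[n]/(size V) -sum1_size.
by apply: leq_sum => w _; rewrite sum1_count count_near_separated.
Qed.

Lemma size_separated_heavy cs : all heavy cs -> separated cs -> (size cs < B)%N.
Proof.
move=> cs_heavy cs_sep.
have n_pos : 0 < n%:R :> R by rewrite ltr0n card_V_gt0.
have : (size cs)%:R * (eta * n%:R) <= n%:R.
  apply: le_trans (_ : \sum_(c <- cs) (ball_count c)%:R <= _); last first.
    by rewrite -natr_sum ler_nat sum_ball_count_le.
  rewrite mulr_natl -sumr_const_seq !big_seq; apply: ler_sum => c c_in.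
  exact/ltW/(allP cs_heavy).
rewrite mulrA -[X in _ <= X]mul1r ler_pM2r // => le1.
have : (size cs)%:R <= eta^-1.
  by rewrite -(ler_pM2l eta_gt0) mulfV ?lt0r_neq0 // mulrC.
by rewrite /B ltnS -truncn_ge_nat // invr_ge0 ltW.
Qed.

Lemma exists_heavy_net : exists cs, [/\ all heavy cs, separated cs &
  forall u, u \in V -> heavy u -> has (fun c => sqnorm (u - c) <= 4) cs].
Proof.
have net_size cs : all heavy cs && separated cs -> (size cs < B)%N.
  by case/andP; exact: size_separated_heavy.
have [cs /andP[cs_heavy cs_sep] maximal] :=
  @exists_maximal_seq _ (fun cs => all heavy cs && separated cs) B isT net_size.
exists cs; split => // u uV u_heavy; apply/negPn/negP => u_far.
apply: (maximal u).
rewrite /separated pairwise_cons -/(separated cs) cs_sep /= u_heavy cs_heavy !andbT.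
by apply/allP => c c_in; rewrite ltNge; exact: (hasPn u_far).
Qed.

Definition energy cs x :=
  \sum_(c <- cs) \sum_(w <- V | sqnorm (w - c) <= 10) dot (w - c) x ^+ 2.

Definition delta := eta * eps ^+ 2 / 64.

Definition principal cs s := orthonormal_family s /\
  forall j, (j < size s)%N -> delta * n%:R < energy cs s`_j.

Lemma energyZ cs a x : energy cs (a *: x) = a ^+ 2 * energy cs x.
Proof.
rewrite /energy mulr_sumr; apply: eq_bigr => c _; rewrite mulr_sumr.
by apply: eq_bigr => w _; rewrite dotZr exprMn.
Qed.

Lemma energy_sqnorm_eq0 cs x : sqnorm x = 0 -> energy cs x = 0.
Proof.
move=> x0; rewrite /energy big1_seq // => c _; rewrite big1_seq // => w _.
by rewrite dotC (sqnorm_eq0_dot _ x0) expr0n.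
Qed.

Lemma sum_energy_le cs s : orthonormal_family s ->
  \sum_(j < size s) energy cs s`_j <= 10 * n%:R * (size cs)%:R.
Proof.
move=> s_on; rewrite /energy exchange_big /= mulr_natr -sumr_const_seq.
apply: ler_sum => c _; rewrite exchange_big /= -[n]/(size V) mulr_natr.
rewrite -sumr_const_seq big_mkcond /=; apply: ler_sum => w _.
by case: ifP => // w_near; exact: le_trans (bessel s_on _) w_near.
Qed.

Lemma size_principal cs s : (size cs < B)%N -> principal cs s -> (size s < k0)%N.
Proof.
move=> cs_lt [s_on s_energy].
have n_pos : 0 < n%:R :> R by rewrite ltr0n card_V_gt0.
have lower : (size s)%:R * (delta * n%:R) <= \sum_(j < size s) energy cs s`_j.
  apply: le_trans (_ : \sum_(j < size s) delta * n%:R <= _).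
    by rewrite sumr_const card_ord mulr_natl.
  by apply: ler_sum => j _; exact/ltW/s_energy.
have upper : 10 * n%:R * (size cs)%:R <= 10 * n%:R * B%:R :> R.
  by rewrite ler_pM2l ?mulr_gt0 ?ltr0n ?card_V_gt0 // ler_nat ltnW.
have key : (size s)%:R * (eta * eps ^+ 2) * n%:R <= 640 * B%:R * n%:R.
  have -> : (size s)%:R * (eta * eps ^+ 2) * n%:R = 64 * ((size s)%:R * (delta * n%:R)).
    by rewrite /delta; field.
  have -> : 640 * B%:R * n%:R = 64 * (10 * n%:R * B%:R) :> R by ring.
  rewrite ler_pM2l //; exact: le_trans lower (le_trans (sum_energy_le cs s_on) upper).
rewrite ler_pM2r // in key.
have X_pos : 0 < eta * eps ^+ 2 by rewrite mulr_gt0 // exprn_gt0.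
have k0_big : 640 * B%:R < k0%:R * (eta * eps ^+ 2).
  have etaB := mul_truncnS_gt1 eta_gt0; have epsA := mul_truncnS_gt1 eps_gt0.
  have -> : k0%:R * (eta * eps ^+ 2) =
      640 * B%:R * (eta * B%:R * (eps * A%:R) ^+ 2).
    by rewrite /k0 !natrM; ring.
  rewrite -[X in X < _]mulr1 ltr_pM2l ?mulr_gt0 ?ltr0n //.
  have sq_epsA : 1 < (eps * A%:R) ^+ 2 by rewrite expr_gt1 // mulr_ge0 // ltW.
  by rewrite -[X in X < _]mulr1; apply: ltr_pM.
by rewrite -(ltr_nat R) -(ltr_pM2r X_pos); exact: le_lt_trans key k0_big.
Qed.

Lemma exists_principal cs : (size cs < B)%N ->
  exists2 s, principal cs s & forall x, (forall j, (j < size s)%N -> dot x s`_j = 0) ->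
    energy cs x <= delta * n%:R * sqnorm x.
Proof.
move=> cs_lt.
have principal_nil : principal cs [::] by split.
have [s [s_on s_energy] maximal] :=
  exists_maximal_seq principal_nil (fun s => size_principal cs_lt).
exists s => // x x_orth; rewrite leNgt; apply/negP => x_energy.
have x_pos : 0 < sqnorm x.
  rewrite lt_neqAle sqnorm_ge0 andbT eq_sym; apply/eqP => x0.
  by move: x_energy; rewrite energy_sqnorm_eq0 // x0 mulr0 ltxx.
pose r := Num.sqrt (sqnorm x).
have r_pos : 0 < r by rewrite sqrtr_gt0.
have r2 : r ^+ 2 = sqnorm x by rewrite sqr_sqrtr // ltW.
apply: (maximal (r^-1 *: x)); split.
  apply: orthonormal_family_cons => // [|j j_lt].
    by rewrite sqnormZ -r2 exprVn mulVf // expf_neq0 // lt0r_neq0.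
  by rewrite dotZl x_orth // mulr0.
case=> [|j] /= j_lt; last exact: s_energy.
by rewrite energyZ exprVn r2 -(ltr_pM2l x_pos) mulVKf ?lt0r_neq0 // mulrC.
Qed.

Definition center_index cs u := find (fun c => sqnorm (u - c) <= 4) cs.

Definition center cs u := cs`_(center_index cs u).

Definition key cs s u : key_type :=
  if (u \in V) && heavy u then
    Some (inord (center_index cs u),
          [ffun j : 'I_k0 => inord (bucket m (-2) (dot (u - center cs u) s`_j))],
          inord (bucket m (-2) (sqnorm (u - center cs u))))
  else None.

Section SameKey.
Variables (cs s : seq 'rV[R]_N).
Hypotheses (cs_lt : (size cs < B)%N) (s_on : orthonormal_family s)
  (s_le : (size s <= k0)%N)
  (cs_covers : forall u, u \in V -> heavy u -> has (fun c => sqnorm (u - c) <= 4) cs).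

Lemma center_near u : u \in V -> heavy u ->
  (center_index cs u < size cs)%N /\ sqnorm (u - center cs u) <= 4.
Proof.
move=> uV u_heavy; have u_cov := cs_covers uV u_heavy.
by split; [rewrite -has_find | exact: (nth_find 0 u_cov)].
Qed.

Lemma coord_range x j : sqnorm x <= 4 -> -2 <= dot x s`_j <= 4.
Proof.
move=> x4; have := dot_sqr_le s_on x j; move: (dot x s`_j) => t t2.
by apply/andP; split; nra.
Qed.

Lemma same_key_close u v : u \in V -> v \in V -> heavy u -> key cs s u = key cs s v ->
  exists2 c, c \in cs & [/\ sqnorm (u - c) <= 4, sqnorm (v - c) <= 4,
    forall j, (j < size s)%N -> `|dot (v - c) s`_j - dot (u - c) s`_j| < m &
    `|sqnorm (v - c) - sqnorm (u - c)| < m].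
Proof.
move=> uV vV u_heavy.
have [v_heavy|v_light] := boolP (heavy v); last first.
  by rewrite /key uV vV u_heavy (negPf v_light).
rewrite /key uV vV u_heavy v_heavy /= => -[same_index same_coords same_norm].
have [cu_lt u_near] := center_near uV u_heavy.
have [cv_lt v_near] := center_near vV v_heavy.
have same_center : center cs v = center cs u.
  by rewrite /center (inord_inj (ltn_trans cv_lt cs_lt) (ltn_trans cu_lt cs_lt)).
rewrite same_center in v_near same_coords same_norm.
exists (center cs u); first exact: mem_nth.
have norm_range x : sqnorm x <= 4 -> -2 <= sqnorm x <= 4.
  by move=> x4; have := sqnorm_ge0 x; lra.
split=> // [j j_lt|]; last exact: bucket_inord_eq (norm_range _ u_near)
  (norm_range _ v_near) same_norm.
have := congr1 (fun f : {ffun 'I_k0 -> 'I_M.+1} => f (Ordinal (leq_trans j_lt s_le)))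
  same_coords.
rewrite !ffunE; exact: bucket_inord_eq (coord_range _ u_near) (coord_range _ v_near).
Qed.

End SameKey.

Definition far_count u v := count (fun w => in_ball u 1 w && ~~ in_ball v (1 + eps) w) V.

Lemma far_count_light u v : ~~ heavy u -> (far_count u v)%:R <= eta * n%:R.
Proof.
move=> u_light; apply: le_trans (_ : (ball_count u)%:R <= _); last by rewrite leNgt.
rewrite ler_nat; apply: sub_count => w /andP[w_u _].
by move: w_u; rewrite in_ballE ?ler01 // expr1n.
Qed.

Lemma count_dot_gt_le cs c x : c \in cs ->
  (count (fun w => (sqnorm (w - c) <= 10) && (eps ^+ 2 / 4 < dot (w - c) x ^+ 2)) V)%:R
    * (eps ^+ 2 / 4) <= energy cs x.
Proof.
move=> c_in.
pose local c := \sum_(w <- V | sqnorm (w - c) <= 10) dot (w - c) x ^+ 2.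
apply: le_trans (_ : local c <= _).
  exact: markov_count (fun w => sqnorm (w - c) <= 10) (fun w => dot (w - c) x ^+ 2)
    _ (fun w _ => sqr_ge0 _).
apply: (ler_sum_mem (F := local)) => // c'.
by apply: sumr_ge0 => w _; exact: sqr_ge0.
Qed.

Lemma far_count_same_key cs s u v : (size cs < B)%N -> principal cs s ->
  (forall x, (forall j, (j < size s)%N -> dot x s`_j = 0) ->
    energy cs x <= delta * n%:R * sqnorm x) ->
  (forall u, u \in V -> heavy u -> has (fun c => sqnorm (u - c) <= 4) cs) ->
  u \in V -> v \in V -> key cs s u = key cs s v ->
  (far_count u v)%:R <= eta * n%:R.
Proof.
move=> cs_lt s_principal s_flat cs_covers uV vV same_key.
have [s_on _] := s_principal.
have s_le := ltnW (size_principal cs_lt s_principal).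
have [u_heavy|] := boolP (heavy u); last exact: far_count_light.
have [c c_in [u_c v_c close_dots close_norm]] :=
  same_key_close cs_lt s_on s_le cs_covers uV vV u_heavy same_key.
pose r := resid s (v - u).
have vu_eq : v - u = (v - c) - (u - c) by rewrite opprB addrA subrK.
have far_dot w : in_ball u 1 w && ~~ in_ball v (1 + eps) w ->
    (sqnorm (w - c) <= 10) && (eps ^+ 2 / 4 < dot (w - c) r ^+ 2).
  have shift y : w - y = (w - c) - (y - c) by rewrite opprB addrA subrK.
  case/andP => w_u w_v.
  have {}w_u : sqnorm (w - c - (u - c)) <= 1.
    by move: w_u; rewrite in_ballE ?ler01 // expr1n shift.
  have {}w_v : (1 + eps) ^+ 2 < sqnorm (w - c - (v - c)).
    have eps1_ge0 : 0 <= 1 + eps by rewrite addr_ge0 // ltW.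
    by move: w_v; rewrite in_ballE // -ltNge shift.
  have := far_point_resid_sqr s_on s_le m_gt0 m_small u_c v_c close_dots close_norm w_u w_v.
  by rewrite -vu_eq.
have r16 : sqnorm r <= 16.
  apply: le_trans (sqnorm_resid_le s_on _) _.
  by rewrite vu_eq; have := sqnormB_le (v - c) (u - c); lra.
have eps_pos : 0 < eps ^+ 2 / 4 by rewrite divr_gt0 // exprn_gt0.
rewrite -(ler_pM2r eps_pos); apply: le_trans (le_trans _ (count_dot_gt_le r c_in)) _.
  by rewrite ler_pM2r // ler_nat; apply: sub_count.
apply: le_trans (s_flat r (dot_resid s_on (v - u))) _.
have -> : eta * n%:R * (eps ^+ 2 / 4) = delta * n%:R * 16 by rewrite /delta; field.
have delta_ge0 : 0 <= delta by rewrite divr_ge0 // mulr_ge0 ?sqr_ge0 // ltW.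
by apply: ler_wpM2l r16; rewrite mulr_ge0.
Qed.

Lemma exists_clustering : exists (K : nat) (cl : 'rV[R]_N -> 'I_K),
  (K <= 2 ^ key_exponent)%N /\
  forall u v, u \in V -> v \in V -> cl u = cl v -> (far_count u v)%:R <= eta * n%:R.
Proof.
have [cs [cs_heavy cs_sep cs_covers]] := exists_heavy_net.
have cs_lt := size_separated_heavy cs_heavy cs_sep.
have [s s_principal s_flat] := exists_principal cs_lt.
exists #|{: key_type}|, (fun u => enum_rank (key cs s u)); split; first exact: card_key_type.
move=> u v uV vV /enum_rank_inj same_key.
exact: far_count_same_key cs_lt s_principal s_flat cs_covers uV vV same_key.
Qed.

End Clustering.

Lemma natr_le_powR_quintic (R : realType) (K E C P : nat) (x : R) :
  (K <= 2 ^ E)%N -> (E <= C * P ^ 5)%N -> 0 <= x -> P%:R <= 4 * x ->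
  K%:R <= 2 `^ (C%:R * 4 ^+ 5 * x ^+ 5).
Proof.
move=> K_le E_le x_ge0 P_le.
apply: (@le_trans _ _ (2 `^ E%:R)); first by rewrite powR_mulrn // -natrX ler_nat.
apply: ler_powR; first by lra.
apply: le_trans (_ : (C * P ^ 5)%:R <= _); first by rewrite ler_nat.
rewrite natrM natrX -mulrA -exprMn; apply: ler_wpM2l => //.
by rewrite lerXn2r // nnegrE // mulr_ge0.
Qed.

Local Open Scope fset_scope.

Theorem lemmaA2 (R : realType) :
  exists p : {poly {poly R}},
  forall (N : nat) (eps eta : R) (V : {fset 'rV[R]_N}),
    (0 < N)%N ->
    0 < eps -> eps <= 1 -> 0 < eta -> eta <= 1 ->
    V != fset0 ->
    exists (K : nat) (cl : 'rV[R]_N -> 'I_K),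
      (K%:R <= (2 : R) `^ (eval2 p (eps^-1) (eta^-1))) /\
      (forall u v, u \in V -> v \in V -> cl u = cl v ->
         (#|` [fset w in V | in_ball u 1 w && ~~ in_ball v (1 + eps) w]|%:R
            <= eta * (#|` V|)%:R)).
Proof.
pose C := (55 * 641 * 641 + 2)%N.
pose p : {poly {poly R}} := ((C%:R * 4 ^+ 5)%:P)%:P * ('X%:P * 'X) ^+ 5.
have p_eval x y : eval2 p x y = C%:R * 4 ^+ 5 * (x * y) ^+ 5.
  by rewrite /eval2 !hornerE.
exists p.
move=> N eps eta V _ eps_gt0 eps_le1 eta_gt0 eta_le1 V_neq0.
have [K [cl [K_le cl_far]]] := exists_clustering eps_gt0 eta_gt0 V_neq0.
exists K, cl; split; last first.
  by move=> u v uV vV same; rewrite card_imfset //= size_filter; exact: cl_far.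
rewrite p_eval.
apply: natr_le_powR_quintic K_le (key_exponent_le eps eta) _ _.
  by rewrite mulr_ge0 // invr_ge0 ltW.
have inv_ge1 (x : R) : 0 < x -> x <= 1 -> 1 <= x^-1 by move=> x_gt0; rewrite invf_ge1.
have A_le := truncnS_le_double (inv_ge1 _ eps_gt0 eps_le1).
have B_le := truncnS_le_double (inv_ge1 _ eta_gt0 eta_le1).
rewrite natrM (_ : 4 * (eps^-1 * eta^-1) = 2 * eps^-1 * (2 * eta^-1)); last by ring.
exact: ler_pM.
Qed.
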